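(* Let $\mathcal{G}=(V,L)$ be a finite connected undirected graph with monitor set $M$ and non-monitor set $N=V\setminus M$, $\sigma=|N|$, and let the measurement paths be given by Controllable Simple-path Probing (CSP). For $v\in N$ let $\delta^*:=|C_{\mathcal{G}^*}(v,m')|$, $\delta_{\min}:=\min_{m\in M}|C_{\mathcal{G}_m}(v,m')|$ and $\pi_v:=\min(\delta_{\min},\delta^*-1)$. If $\pi_v\le\sigma-2$, then the maximum identifiability index of $v$ under CSP satisfies $\pi_v-1\le\Omega_{\mathrm{CSP}}(v)\le\pi_v$.
   Context: Failure model: a failure set is any $F\subseteq N$; a path fails iff it traverses a node of $F$. $P_F$ is the set of measurement paths traversing a node of $F$; $F_1,F_2$ distinguishable iff $P_{F_1}\ne P_{F_2}$. $S\subseteq N$ is $k$-identifiable if any two failure sets $F_1,F_2$ with $|F_1|,|F_2|\le k$ and $F_1\cap S\ne F_2\cap S$ are distinguishable (every set is trivially $0$-identifiable). $\Omega(v)$ is the maximum $k\in\{0,\dots,\sigma\}$ such that $\{v\}$ is $k$-identifiable. Under CSP, the measurement paths are all simple paths (no repeated nodes) in $\mathcal{G}$ between two distinct monitors. For $M'\subseteq M$, $\mathcal{N}(M')$ is the set of non-monitors adjacent to a monitor in $M'$. $\mathcal{G}^*$: delete all monitors from $\mathcal{G}$, add a virtual node $m'$, link $m'$ to every node of $\mathcal{N}(M)$. For $m\in M$, $\mathcal{G}_m$: delete all monitors from $\mathcal{G}$, add a virtual node $m'$, link $m'$ to every node of $\mathcal{N}(M\setminus\{m\})$. For nodes $s,t$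 of a graph $\mathcal{H}$, $C_{\mathcal{H}}(s,t)$ is a minimum-cardinality set of nodes (other than $s,t$) whose deletion destroys all $s$–$t$ paths; if $s,t$ are adjacent, $C_{\mathcal{H}}(s,t):=V(\mathcal{H})\setminus\{t\}$. *)

From mathcomp Require Import all_boot.
From mathcomp Require Import boolp.

Set Implicit Arguments.
Unset Strict Implicit.
Unset Printing Implicit Defensive.

Section Defs.
Variables (T : finType) (e : rel T) (M : {set T}).

Definition undirected_graph := symmetric e /\ irreflexive e.
Definition connected_graph := forall x y : T, connect e x y.

Definition nonmon : {set T} := ~: M.
Definition sigma := #|nonmon|.

Definition csp_path (p : seq T) : bool :=
  if p is x0 :: rest then
    [&& path e x0 rest, uniq p, x0 \in M, last x0 rest \in M & x0 != last x0 rest]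
  else false.

Definition PF (F : {set T}) : pred (seq T) :=
  fun p => csp_path p && has (mem F) p.

Definition distinguishable (F1 F2 : {set T}) : Prop := PF F1 <> PF F2.

Definition k_identifiable (S : {set T}) (k : nat) : Prop :=
  forall F1 F2 : {set T}, F1 \subset nonmon -> F2 \subset nonmon ->
    #|F1| <= k -> #|F2| <= k -> F1 :&: S != F2 :&: S ->
    distinguishable F1 F2.

Definition Omega (v : T) : nat :=
  \max_(k < sigma.+1 | `[< k_identifiable [set v] k >]) k.

Definition nbr_set (M' : {set T}) : {set T} :=
  [set y | (y \notin M) && [exists m in M', e m y]].

(* Auxiliary graphs on vertex type option T: None is the virtual node m',
   Some x the original node x.  Vertex set: m' together with the non-monitors. *)
Definition aux_vertices : {set option T} :=
  [set o | if o is Some x then x \notin M else true].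

Definition aux_rel (M' : {set T}) : rel (option T) :=
  fun a b => match a, b with
             | Some x, Some y => e x y
             | None, Some y => y \in nbr_set M'
             | Some x, None => x \in nbr_set M'
             | None, None => false
             end.

Definition Gstar_rel := aux_rel M.
Definition Gm_rel (m : T) := aux_rel (M :\ m).
End Defs.

Section Cut.
Variables (H : finType) (D : {set H}) (eH : rel H).

Definition separates (S : {set H}) (s t : H) : bool :=
  ~~ connect [rel x y | [&& eH x y, x \in D :\: S & y \in D :\: S]] s t.

Definition cut_size (s t : H) : nat :=
  if eH s t then #|D| - 1
  else \big[minn/#|D|]_(S : {set H} | (S \subset D :\: [set s; t]) && separates S s t) #|S|.
End Cut.

From mathcomp Require Import all_boot boolp order zify.
Import Order.TTheory.

(* Every CSP path through v splits at v into two node-disjoint halves running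
   from v to monitors.  Upper bound: for a minimum cut S of G_m at most one half
   can end at m, so the path meets S; for a minimum cut S of G^* both halves
   meet S, at different nodes, so the path meets S minus any one node.  Either
   way the failure sets F and F + v, with |F + v| = pi_v + 1, are not
   distinguishable.  Lower bound: if |F| < pi_v, no single node separates v
   from the monitors in G - F (a non-monitor would extend F to a cut of G^* of
   size at most |F| + 1 < delta^*, a monitor m would leave a cut of G_m of size
   |F| < delta_min), so by the two-path case of Menger's theorem v lies on a
   CSP path avoiding F. *)

Set Implicit Arguments.
Unset Strict Implicit.
Unset Printing Implicit Defensive.

Section SeqSplit.
Variable T : eqType.
Implicit Types (X : pred T) (l : seq T).

Lemma split_find_last X l : has X l ->
  exists l1 x l2, [/\ l = l1 ++ x :: l2, X x & ~~ has X l2].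
Proof.
elim: l => //= y l IHl; have [Xl _ | nXl] := boolP (has X l); last rewrite orbF => Xy.
  by have [l1 [x [l2 [-> Xx nXl2]]]] := IHl Xl; exists (y :: l1), x, l2.
by exists [::], y, l.
Qed.

Lemma split_bridge (X Y : seq T) x0 l : x0 \in X -> has (mem Y) l ->
  exists L x q z R,
    [/\ x0 :: l = L ++ x :: q ++ z :: R, x \in X, z \in Y,
        {in q, forall y, y \notin X} & {in q, forall y, y \notin Y}].
Proof.
move=> Xx0 /split_find[z R1 R Yz nYR1].
have /split_find_last[L [x [q [def_R1 Xx nXq]]]] : has (mem X) (x0 :: R1).
  by apply/hasP; exists x0; rewrite ?mem_head.
exists L, x, q, z, R; split=> //; first by rewrite -cats1 -catA /= -cat_cons def_R1 -catA.
  exact/hasPn.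
move=> y yq; have /hasPn/(_ y yq) yX := nXq.
have : y \in x0 :: R1 by rewrite def_R1 mem_cat inE yq !orbT.
rewrite inE => /orP[/eqP yx0 | yR1]; first by case/negP: yX; rewrite yx0.
exact: (hasPn nYR1).
Qed.

Lemma uniq_insert l1 q l2 :
  uniq (l1 ++ l2) -> uniq q -> {in q, forall y, y \notin l1 ++ l2} ->
  uniq (l1 ++ q ++ l2).
Proof.
move=> u12 uq nq; have /perm_uniq -> : perm_eq (l1 ++ q ++ l2) (q ++ l1 ++ l2).
  by rewrite perm_catCA.
by rewrite cat_uniq uq u12 andbT has_sym; apply/hasPn.
Qed.

End SeqSplit.

Section TwoDisjointPaths.
Variables (H : finType) (h : rel H) (s t : H).

Lemma path_avoid z x p : path [rel a b | h a b && (b != z)] x p -> z \notin p.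
Proof.
elim: p x => //= y p IHp x /andP[/andP[_ yz] /IHp].
by rewrite inE negb_or eq_sym yz.
Qed.

(* [A1] and [A2] are two s-b paths meeting only at [b], and [P] continues
   from [b] to [t] avoiding both; the argument pushes [b] towards [t]. *)
Definition fork b (A1 A2 P : seq H) : Prop :=
  [/\ [/\ path h s A1, last s A1 = b, path h s A2 & last s A2 = b],
      [/\ path h b P, last b P = t & b != s],
      uniq (s :: A1 ++ P), uniq (s :: A2 ++ P) &
      {in A1, forall y, y \in A2 -> y = b}].

Lemma fork_sym b A1 A2 P : fork b A1 A2 P -> fork b A2 A1 P.
Proof. by case=> [[? ? ? ?] ? ? ? A12]; split=> // y yA2 yA1; apply: A12. Qed.

Lemma fork_init : s != t -> connect h s t -> exists b P, fork b [:: b] [:: b] P.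
Proof.
move=> st /connectP[p0 /shortenP[p hp up _] t_def].
case: p hp up t_def => [_ _ /= ts | b P /= /andP[hsb hP] up t_def]; first by rewrite ts eqxx in st.
have bs : b != s by move: up; rewrite !inE negb_or eq_sym => /andP[/andP[]].
exists b, P; split=> //=; first by rewrite hsb.
by move=> y; rewrite inE => /eqP.
Qed.

Lemma fork_reroute b A1 A2 P x q z : fork b A1 A2 P ->
  x \in s :: A1 -> x != b -> z \in P -> path h x (rcons q z) -> uniq q ->
  {in q, forall y, y \notin s :: A1 ++ A2} -> {in q, forall y, y \notin P} ->
  exists A1' A2' P', fork z A1' A2' P' /\ size P' < size P.
Proof.
move=> F xA1 xb zP hq uq nXq nPq.
case/splitPl: xA1 F nXq => A1p A1q lA1p F nXq; case/splitPr: zP F nPq => Pa Pb F nPq.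
case: F => [[hA1 lA1 hA2 lA2] [hP lP bs] uA1P uA2P A12].
move: hP; rewrite cat_path /= => /and3P[hPa hz hPb].
move: hA1; rewrite cat_path => /andP[hA1p _].
have bA1q : b \in A1q.
  have := mem_last x A1q; rewrite -{1}lA1p -last_cat lA1 inE.
  by case/orP=> [/eqP bx | //]; rewrite bx eqxx in xb.
have PXdisj y : y \in Pa ++ z :: Pb -> y \in s :: A1p ++ A1q -> False.
  by move=> yP yA; move: uA1P; rewrite -cat_cons cat_uniq => /and3P[_ /hasPn/(_ y yP)]; rewrite yA.
exists (A1p ++ rcons q z), (A2 ++ rcons Pa z), Pb; split; last first.
  by rewrite size_cat /= addnS ltnS leq_addl.
rewrite /fork; split.
- by rewrite !cat_path lA1p hA1p hq hA2 lA2 rcons_path hPa hz !last_cat !last_rcons.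
- split; [done | by rewrite -lP last_cat | ].
  apply/negP => /eqP zs; apply: (PXdisj z); first by rewrite mem_cat mem_head orbT.
  by rewrite zs mem_head.
- have sub : subseq (s :: A1p ++ z :: Pb) (s :: (A1p ++ A1q) ++ Pa ++ z :: Pb).
    by rewrite -!cat_cons cat_subseq ?prefix_subseq ?suffix_subseq.
  rewrite -catA cat_rcons -cat_cons; apply: uniq_insert; [exact: subseq_uniq sub uA1P | done |].
  move=> y yq; rewrite mem_cat negb_or; apply/andP; split.
    by apply: contra (nXq y yq); rewrite !inE !mem_cat => /orP[-> | ->]; rewrite ?orbT.
  by apply: contra (nPq y yq); rewrite mem_cat => ->; rewrite orbT.
- by rewrite -cats1 -!catA.
- have nA1p_b : b \notin A1p.
    move: uA1P; rewrite /= -catA cat_uniq => /and4P[_ _ /hasPn/(_ b) + _].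
    by rewrite mem_cat bA1q => /(_ isT).
  move=> y; rewrite mem_cat mem_rcons in_cons => /or3P[yA1p | /eqP -> // | yq].
    rewrite mem_cat mem_rcons in_cons => /or3P[yA2 | /eqP -> // | yPa].
      by move: nA1p_b; rewrite -(A12 y) ?mem_cat ?yA1p ?yA2.
    by exfalso; apply: (PXdisj y); rewrite ?in_cons !mem_cat ?yPa ?yA1p ?orbT.
  rewrite mem_cat mem_rcons in_cons => /or3P[yA2 | /eqP -> // | yPa].
    by move: (nXq y yq); rewrite !inE !mem_cat yA2 !orbT.
  by move: (nPq y yq); rewrite mem_cat yPa.
Qed.

Lemma fork_shrink b A1 A2 P : fork b A1 A2 P -> P != [::] ->
  (forall z, z != s -> z != t -> connect [rel x y | h x y && (y != z)] s t) ->
  exists b' A1' A2' P', fork b' A1' A2' P' /\ size P' < size P.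
Proof.
move=> F nP avoid; have [[hA1 lA1 hA2 lA2] [hP lP bs] uA1P uA2P A12] := F.
have tP : t \in P by move: nP; rewrite -lP; case: (P) => // y P' _ /=; apply: mem_last.
have bt : b != t.
  have := mem_last s A1; rewrite lA1 in_cons (negbTE bs) /= => bA1.
  apply: contraTneq uA1P => eq_bt; rewrite cons_uniq cat_uniq.
  by apply/negP => /and4P[_ _ /hasPn/(_ t tP) /negP[]]; rewrite -eq_bt.
have /connectP[R0 /shortenP[R hR uR _] tR] := avoid b bs bt.
have bR : b \notin s :: R by rewrite in_cons negb_or bs (path_avoid hR).
have sP : s \notin P by move: uA1P; rewrite cons_uniq mem_cat negb_or => /andP[/andP[_ ->]].
have PR : has (mem P) R.
  apply/hasP; exists t => //; have := mem_last s R; rewrite -tR in_cons.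
  by case/orP=> [/eqP ts | //]; rewrite -ts tP in sP.
have [L [x [q [z [R2 [defR Xx Pz nXq nPq]]]]]] :=
  split_bridge (mem_head s (A1 ++ A2)) PR.
have hR' : path h s R by apply: sub_path hR => u w /andP[].
have hqz : path h x (rcons q z).
  move: hR'; rewrite -[path h s R]/(sorted h (s :: R)) defR sorted_cat_cons.
  by rewrite cat_path rcons_path /= => /andP[_ /andP[-> /andP[-> _]]].
have xb : x != b by apply: contraNneq bR => <-; rewrite defR mem_cat mem_head orbT.
have uq : uniq q.
  by move: uR; rewrite defR cat_uniq cons_uniq cat_uniq => /and3P[_ _ /andP[_ /andP[]]].
exists z; have /orP[xA1 | xA2] : (x \in s :: A1) || (x \in A2) by rewrite -mem_cat.
  exact: (fork_reroute F xA1 xb Pz hqz uq nXq nPq).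
apply: (fork_reroute (fork_sym F) _ xb Pz hqz uq _ nPq); first by rewrite in_cons xA2 orbT.
by move=> y /nXq; rewrite !in_cons !mem_cat [(y \in A1) || _]orbC.
Qed.

Lemma two_disjoint_paths : s != t -> connect h s t ->
  (forall z, z != s -> z != t -> connect [rel x y | h x y && (y != z)] s t) ->
  exists A1 A2, fork t A1 A2 [::].
Proof.
move=> st cst avoid; have [b [P F0]] := fork_init st cst.
suff : forall n P b A1 A2,
  size P < n -> fork b A1 A2 P -> exists A1 A2, fork t A1 A2 [::].
  by apply; [exact: ltnSn | exact: F0].
clear F0; elim=> // n IHn {}P {}b A1 A2 szP F; have [P0 | nP] := eqVneq P [::].
  by move: F; rewrite P0 => F; case: (F) => _ [_ /= bt _] _ _ _; exists A1, A2; rewrite -bt.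
have [b' [A1' [A2' [P' [F' szP']]]]] := fork_shrink F nP avoid.
exact: IHn (leq_trans szP' szP) F'.
Qed.

End TwoDisjointPaths.

Lemma bigmin_attained (I : finType) (P : pred I) (F : I -> nat) x0 :
  \big[minn/x0]_(i | P i) F i < x0 -> exists2 i, P i & \big[minn/x0]_(i | P i) F i = F i.
Proof.
apply: (big_ind (fun n => n < x0 -> exists2 i, P i & n = F i)) => [| m n IHm IHn | i Pi _].
- by rewrite ltnn.
- by rewrite /minn; case: ifP => [_ /IHm | _ /IHn].
- by exists i.
Qed.

Section MinCut.
Variables (H : finType) (D : {set H}) (eH : rel H).

Lemma cut_size_le (S : {set H}) s t : s \in D -> t \in D ->
  S \subset D :\: [set s; t] -> separates D eH S s t -> cut_size D eH s t <= #|S|.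
Proof.
move=> sD tD sub sep; have [sS tS] : s \notin S /\ t \notin S.
  by split; apply/negP => /(subsetP sub); rewrite !inE eqxx ?orbT.
rewrite /cut_size; case: ifP => [est | _].
  by case/negP: sep; apply: connect1; rewrite /= est !inE sS tS sD tD.
by have := @bigmin_le_cond _ _ _ #|D| S _ (fun S : {set H} => #|S|); apply; rewrite sub.
Qed.

Lemma cut_size_attained s t : cut_size D eH s t < #|D| - 1 ->
  exists2 S : {set H}, S \subset D :\: [set s; t] /\ separates D eH S s t
                     & #|S| = cut_size D eH s t.
Proof.
rewrite /cut_size; case: ifP => _; first by rewrite ltnn.
move=> lt; have /bigmin_attained[S /andP[sub sep] ->] := leq_trans lt (leq_subr 1 _).
by exists S.
Qed.

End MinCut.

Section Identifiability.
Variables (T : finType) (e : rel T) (M : {set T}) (v : T).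

Lemma k_identifiable_le S j k :
  j <= k -> k_identifiable e M S k -> k_identifiable e M S j.
Proof.
move=> jk idk F1 F2 F1N F2N F1j F2j; apply: idk => //; exact: leq_trans jk.
Qed.

Lemma leq_Omega k :
  k <= sigma M -> k_identifiable e M [set v] k -> k <= Omega e M v.
Proof.
rewrite -ltnS => lt idk.
by apply: (@leq_bigmax_cond _ _ _ (Ordinal lt)); apply/asboolP.
Qed.

Lemma Omega_le k : ~ k_identifiable e M [set v] k.+1 -> Omega e M v <= k.
Proof.
move=> nidk; apply/bigmax_leqP => i /asboolP idi; rewrite leqNgt; apply/negP => lt.
exact/nidk/(k_identifiable_le lt).
Qed.

Lemma singleton_identifiable k :
  (forall F : {set T}, F \subset nonmon M -> v \notin F -> #|F| <= k ->
     exists2 p, csp_path e M p & (v \in p) && ~~ has (mem F) p) ->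
  k_identifiable e M [set v] k.
Proof.
move=> avoid F1 F2 F1N F2N F1k F2k neq.
have sep (A B : {set T}) : B \subset nonmon M -> #|B| <= k -> v \in A -> v \notin B ->
    distinguishable e M A B.
  move=> BN Bk vA vB PFAB; have [p csp_p /andP[vp nBp]] := avoid B BN vB Bk.
  have := congr1 (@^~ p) PFAB; rewrite /PF csp_p (negbTE nBp) /=.
  by move/negbT/hasPn/(_ v vp)/negP.
have : (v \in F1) != (v \in F2).
  apply: contraNneq neq => vF12; apply/eqP/setP => x; rewrite !inE.
  by case: (eqVneq x v) => [-> | _]; rewrite ?vF12 ?andbF.
have [vF1 | vF1] := boolP (v \in F1); have [vF2 | vF2] := boolP (v \in F2) => // _.
  exact: sep.
by move=> PF12; apply: (sep F2 F1).
Qed.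

Lemma Omega_le_cover (F : {set T}) :
  F \subset nonmon M -> v \notin F -> v \notin M ->
  (forall p, csp_path e M p -> v \in p -> has (mem F) p) -> Omega e M v <= #|F|.
Proof.
move=> FN vF vM cover; apply: Omega_le => idk.
have vFN : v |: F \subset nonmon M by rewrite subUset sub1set inE vM.
apply: (idk (v |: F) F vFN FN _ (leqnSn _)).
- by rewrite cardsU1 vF.
- by apply/negP => /eqP/setP/(_ v); rewrite !inE eqxx (negbTE vF).
- apply: funext => p; rewrite /PF; case csp_p: (csp_path e M p) => //=.
  have [vp | vp] := boolP (v \in p).
    by rewrite (cover p csp_p vp); apply/hasP; exists v => //; rewrite inE setU11.
  apply: eq_in_has => y yp; rewrite /= !inE.
  by case: eqP => [yv | //]; rewrite -yv yp in vp.
Qed.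

End Identifiability.

Section Probing.
Variables (T : finType) (e : rel T) (M : {set T}) (v : T).
Hypotheses (e_sym : symmetric e) (vN : v \notin M).

Local Notation D := (aux_vertices M).

Lemma sigma_aux : sigma M = #|D| - 1.
Proof.
have -> : D = None |: (Some @: nonmon M).
  by apply/setP => -[x|]; rewrite !inE ?(mem_imset _ _ Some_inj) ?inE.
rewrite cardsU1 card_imset; last exact: Some_inj.
have /negPf-> : None \notin Some @: nonmon M by apply/imsetP => -[].
by rewrite add1n subn1.
Qed.

Lemma card_preimage_Some (S : {set option T}) : None \notin S -> #|Some @^-1: S| = #|S|.
Proof.
move=> nS; rewrite -(card_imset _ Some_inj); apply: eq_card => -[x|].
  by rewrite (mem_imset _ _ Some_inj) inE.
by rewrite (negbTE nS); apply/imsetP => -[].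
Qed.

Lemma cut_subset_preimage (S : {set option T}) : S \subset D :\: [set Some v; None] ->
  [/\ None \notin S, Some v \notin S & Some @^-1: S \subset nonmon M].
Proof.
move=> sub; split; try by apply/negP => /(subsetP sub); rewrite !inE eqxx ?orbT.
by apply/subsetP => x; rewrite inE => /(subsetP sub); rewrite !inE => /andP[_ ->].
Qed.

(* G - X plus a sink [None] adjacent to every monitor, so that the paths from
   [Some v] to [None] are the walks from [v] to a monitor avoiding [X]. *)
Definition monitor_sink (X : {set T}) : rel (option T) := fun a b =>
  match a, b with
  | Some x, Some y => [&& e x y, x \notin X & y \notin X]
  | Some x, None | None, Some x => (x \in M) && (x \notin X)
  | None, None => false
  end.

Lemma monitor_sink_sym X : symmetric (monitor_sink X).
Proof. by case=> [x|] [y|] //=; rewrite e_sym [(x \notin X) && _]andbC. Qed.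

Definition cut_rel (M' : {set T}) (S : {set option T}) : rel (option T) :=
  [rel a b | [&& aux_rel e M M' a b, a \in D :\: S & b \in D :\: S]].

Lemma separatesE M' S s t :
  separates D (aux_rel e M M') S s t = ~~ connect (cut_rel M' S) s t.
Proof. by []. Qed.

Lemma separates_of_disconnected (M' X : {set T}) :
  M' \subset M -> [disjoint M' & X] -> ~~ connect (monitor_sink X) (Some v) None ->
  separates D (aux_rel e M M') (Some @: (X :\: M)) (Some v) None.
Proof.
move=> M'M M'X; rewrite separatesE; apply: contra; apply: connect_sub => a b.
have inDX x : (Some x \in D :\: Some @: (X :\: M)) = (x \notin M) && (x \notin X).
  by rewrite !inE (mem_imset _ _ Some_inj) !inE; case: (x \in M); rewrite ?andbF ?andbT.
have via_monitor x : x \in nbr_set e M M' -> x \notin X ->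
    connect (monitor_sink X) (Some x) None.
  rewrite inE => /andP[xM /existsP[m /andP[mM' emx]]] xX.
  have mX : m \notin X by rewrite (disjointFr M'X mM').
  apply: connect_trans (connect1 (_ : monitor_sink X _ (Some m))) (connect1 _).
    by rewrite /= e_sym emx xX mX.
  by rewrite /= (subsetP M'M _ mM') mX.
case: a b => [x|] [y|] //=; rewrite /cut_rel /= ?inDX.
- by case/and3P=> exy /andP[_ xX] /andP[_ yX]; apply: connect1; rewrite /= exy xX yX.
- by case/and3P=> xN /andP[_ xX] _; exact: via_monitor.
- case/and3P=> yN _ /andP[_ yX].
  by rewrite (sym_connect_sym (monitor_sink_sym X)); apply: via_monitor.
Qed.

Lemma connect_monitor_sink (M' X : {set T}) :
  M' \subset M -> [disjoint M' & X] -> v \notin X ->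
  #|X :\: M| < cut_size D (aux_rel e M M') (Some v) None ->
  connect (monitor_sink X) (Some v) None.
Proof.
move=> M'M M'X vX; apply: contraTT => /(separates_of_disconnected M'M M'X) sep.
rewrite -leqNgt -(card_imset _ Some_inj); apply: cut_size_le sep; rewrite ?inE //.
apply/subsetP => _ /imsetP[x xXM ->]; move: xXM; rewrite !inE => /andP[xM xX].
by rewrite xM /= orbF andbT; apply: contraNneq vX => -[<-].
Qed.

Lemma monitor_sink_path X x p :
  path (monitor_sink X) (Some x) p -> last (Some x) p = None -> uniq (Some x :: p) ->
  exists q, [/\ p = rcons (map Some q) None, path e x q,
                {in q, forall y, y \notin X} & last x q \in M].
Proof.
elim: p x => //= -[y|] p IHp x /andP[hxy hp] lp /andP[_ up].
  have [q [-> hq qX lq]] := IHp y hp lp up; exists (y :: q).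
  case/and3P: hxy => exy _ yX; split=> //=; first by rewrite exy.
  by move=> z; rewrite in_cons => /orP[/eqP -> | /qX].
case: p hp lp up {IHp} => [_ _ _ | z p _ lp]; first by case/andP: hxy => xM _; exists [::].
by rewrite /= in lp; case/andP=> /negP[]; rewrite -[None in None \in _]lp mem_last.
Qed.

Lemma csp_path_join p q : path e v p -> last v p \in M -> path e v q -> last v q \in M ->
  uniq (v :: p) -> uniq (v :: q) -> {in p, forall y, y \notin q} ->
  csp_path e M (rev (v :: p) ++ q).
Proof.
move=> hp lp hq lq up uq pq.
case/lastP: p hp lp up pq => [|p m]; first by rewrite /= (negbTE vN).
rewrite last_rcons => hp mM up pq; rewrite rev_cons rev_rcons /=.
move: uq; rewrite cons_uniq => /andP[vq uq].
have mq : m \notin q by apply: pq; rewrite mem_rcons mem_head.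
rewrite mM cat_path last_rcons hq last_cat last_rcons lq andbT.
apply/and3P; split.
- have := rev_path e v (rcons p m); rewrite last_rcons belast_rcons rev_cons => ->.
  by rewrite (@eq_path _ _ e) // => a b; exact: e_sym.
- have : uniq (rev (v :: rcons p m) ++ q); last by rewrite rev_cons rev_rcons.
  rewrite cat_uniq rev_uniq up uq andbT.
  apply/hasPn => y yq; rewrite mem_rev; apply: contraL yq => /orP[/eqP -> // | yp].
  exact: pq.
- apply/eqP => eq_m; have := mem_last v q; rewrite -eq_m in_cons (negbTE mq) orbF.
  by move/eqP=> mv; move: vN; rewrite -mv mM.
Qed.

Section Avoiding.
Variable F : {set T}.
Hypotheses (FN : F \subset nonmon M) (vF : v \notin F).
Hypothesis cut_star : #|F|.+1 < cut_size D (Gstar_rel e M) (Some v) None.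
Hypothesis cut_m : forall m, m \in M -> #|F| < cut_size D (Gm_rel e M m) (Some v) None.

Let M_F : [disjoint M & F].
Proof. by rewrite disjoint_sym disjoints_subset. Qed.

Lemma connect_monitor_sink_off w : v != w -> connect (monitor_sink (w |: F)) (Some v) None.
Proof.
move=> vw; have vwF : v \notin w |: F by rewrite !inE negb_or vw.
have [wM | wM] := boolP (w \in M).
  apply: (@connect_monitor_sink (M :\ w)) => //; first exact: subsetDl.
    rewrite disjoints_subset; apply/subsetP => x; rewrite !inE => /andP[xw xM].
    by rewrite negb_or xw (disjointFr M_F xM).
  apply: leq_ltn_trans (cut_m wM); apply: subset_leq_card; apply/subsetP => x.
  by rewrite !inE => /andP[xM /orP[/eqP xw | //]]; rewrite xw wM in xM.
apply: (@connect_monitor_sink M) => //.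
  rewrite disjoints_subset; apply/subsetP => x xM; rewrite !inE negb_or (disjointFr M_F xM).
  by rewrite andbT; apply: contraTneq xM => ->.
apply: leq_ltn_trans cut_star; apply: leq_trans (subset_leq_card (subsetDl _ _)) _.
by rewrite cardsU1; case: (w \notin F).
Qed.

Lemma csp_path_avoiding : exists2 p, csp_path e M p & (v \in p) && ~~ has (mem F) p.
Proof.
have cst : connect (monitor_sink F) (Some v) None.
  apply: (@connect_monitor_sink M) => //.
  exact: leq_ltn_trans (subset_leq_card (subsetDl F M)) (ltnW cut_star).
have avoid z : z != Some v -> z != None ->
    connect [rel a b | monitor_sink F a b && (b != z)] (Some v) None.
  case: z => [w|] // wv _; apply: connect_sub (connect_monitor_sink_off _); last first.
    by apply: contraNneq wv => ->.
  move=> a b hab; apply: connect1; case: a b hab => [x|] [y|] //=; rewrite !inE ?negb_or.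
  - by case/and3P=> -> /andP[_ ->] /andP[/negPf yw ->]; rewrite (inj_eq Some_inj) yw.
  - by case/andP=> -> /andP[_ ->].
  - by case/andP=> -> /andP[/negPf yw ->]; rewrite (inj_eq Some_inj) yw.
have [A1 [A2 [[hA1 lA1 hA2 lA2] _ uA1 uA2 A12]]] :=
  two_disjoint_paths (isT : Some v != None) cst avoid.
rewrite cats0 in uA1; rewrite cats0 in uA2.
have [p [A1p hp pF lp]] := monitor_sink_path hA1 lA1 uA1.
have [q [A2q hq qF lq]] := monitor_sink_path hA2 lA2 uA2.
have uniq_v r : uniq (Some v :: rcons (map Some r) None) -> uniq (v :: r).
  by rewrite -rcons_cons rcons_uniq -map_cons (map_inj_uniq Some_inj) => /andP[].
exists (rev (v :: p) ++ q).
  apply: (csp_path_join hp lp hq lq).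
  - by apply: uniq_v; rewrite -A1p.
  - by apply: uniq_v; rewrite -A2q.
  move=> y yp; apply/negP => yq; have := A12 (Some y).
  by rewrite A1p A2q !mem_rcons !in_cons !(mem_map Some_inj) yp yq => /(_ isT isT).
rewrite mem_cat mem_rev mem_head has_cat has_rev negb_or.
apply/and3P; split=> //; apply/hasPn => y; last exact: qF.
by rewrite in_cons => /orP[/eqP -> | /pF].
Qed.

End Avoiding.

Lemma csp_path_split p : csp_path e M p -> v \in p ->
  exists pl pr, [/\ path e v pl, last v pl \in M, path e v pr & last v pr \in M] /\
    [/\ {in pl, forall y, y \notin pr}, {subset pl <= p} & {subset pr <= p}].
Proof.
case: p => // x0 p /and5P[hp up x0M lM _] vp.
have {}vp : v \in p.
  by move: vp; rewrite in_cons => /orP[/eqP vx0 | //]; move: vN; rewrite vx0 x0M.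
case/splitPr: vp hp up lM => pl pr hp up lM.
move: hp; rewrite cat_path /= => /and3P[hpl hv hpr].
exists (rev (x0 :: pl)), pr; split; split=> //.
- have := rev_path e x0 (rcons pl v); rewrite last_rcons belast_rcons => ->.
  by rewrite (@eq_path _ _ e) ?rcons_path ?hpl // => a b; exact: e_sym.
- by rewrite rev_cons last_rcons.
- by move: lM; rewrite last_cat.
- move=> y; rewrite mem_rev => ypl; apply/negP => ypr.
  move: up; rewrite -cat_cons cat_uniq => /and3P[_ /hasPn/(_ y) + _].
  by rewrite in_cons ypr orbT => /(_ isT)/negP; apply.
- by move=> y; rewrite mem_rev -cat_cons mem_cat => ->.
- by move=> y ypr; rewrite in_cons mem_cat in_cons ypr !orbT.
Qed.

Lemma cut_rel_connect (M' : {set T}) (S : {set option T}) x q :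
  None \notin S -> x \notin M -> Some x \notin S -> path e x q -> last x q \in M ->
  {in q, forall y, Some y \notin S} -> {in q, forall y, y \in M -> y \in M'} ->
  connect (cut_rel M' S) (Some x) None.
Proof.
move=> nS; elim: q x => [|y q IHq] x xM xS /=; first by rewrite (negbTE xM).
case/andP=> exy hq lq qS qM'.
have yS : Some y \notin S by apply: qS; rewrite mem_head.
have [yM | yM] := boolP (y \in M).
  apply: connect1; rewrite /cut_rel /= !inE xM xS nS /= andbT.
  by apply/existsP; exists y; rewrite qM' ?mem_head // e_sym exy.
apply: connect_trans (connect1 _) (IHq y yM yS hq lq _ _).
- by rewrite /cut_rel /= !inE exy xM xS yM yS.
- by move=> z zq; apply: qS; rewrite in_cons zq orbT.
- by move=> z zq; apply: qM'; rewrite in_cons zq orbT.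
Qed.

Lemma monitor_path_meets_cut (M' : {set T}) (S : {set option T}) q :
  None \notin S -> Some v \notin S -> separates D (aux_rel e M M') S (Some v) None ->
  path e v q -> last v q \in M ->
  has (mem (Some @^-1: S)) q || has (mem (M :\: M')) q.
Proof.
move=> nS vS; rewrite separatesE => sep hq lq; apply: contraNT sep => /norP[qS qM'].
apply: (cut_rel_connect nS vN vS hq lq) => y yq.
  by have := hasPn qS y yq; rewrite /= inE.
by have := hasPn qM' y yq; rewrite /= !inE => /nandP[/negPn | /negP].
Qed.

Lemma csp_path_meets_Gm_cut m (S : {set option T}) :
  None \notin S -> Some v \notin S -> separates D (Gm_rel e M m) S (Some v) None ->
  forall p, csp_path e M p -> v \in p -> has (mem (Some @^-1: S)) p.
Proof.
move=> nS vS sep p csp_p vp.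
have [pl [pr [[hpl lpl hpr lpr] [pl_pr pl_p pr_p]]]] := csp_path_split csp_p vp.
have meets r : {subset r <= p} -> path e v r -> last v r \in M ->
    has (mem (Some @^-1: S)) p || (m \in r).
  move=> r_p hr lr.
  have /orP[/hasP[y yr yS] | /hasP[y yr]] := monitor_path_meets_cut nS vS sep hr lr.
    by apply/orP; left; apply/hasP; exists y; first exact: r_p.
  by rewrite /= !inE => /andP[/nandP[/negPn/eqP <- | /negP //]]; rewrite yr orbT.
have /orP[// | mpl] := meets pl pl_p hpl lpl.
have /orP[// | mpr] := meets pr pr_p hpr lpr.
by have := pl_pr m mpl; rewrite mpr.
Qed.

Lemma csp_path_meets_Gstar_cut (S : {set option T}) c :
  None \notin S -> Some v \notin S -> separates D (Gstar_rel e M) S (Some v) None ->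
  forall p, csp_path e M p -> v \in p -> has (mem (Some @^-1: S :\ c)) p.
Proof.
move=> nS vS sep p csp_p vp.
have [pl [pr [[hpl lpl hpr lpr] [pl_pr pl_p pr_p]]]] := csp_path_split csp_p vp.
have meets r : path e v r -> last v r \in M -> exists2 y, y \in r & Some y \in S.
  move=> hr lr; have := monitor_path_meets_cut nS vS sep hr lr.
  rewrite setDv; have -> : has (mem set0) r = false by apply/hasPn => y _; rewrite /= inE.
  by rewrite orbF => /hasP[y yr]; rewrite /= inE; exists y.
have [y1 y1pl y1S] := meets pl hpl lpl; have [y2 y2pr y2S] := meets pr hpr lpr.
apply/hasP; case: (eqVneq y1 c) => [y1c | y1c]; last first.
  by exists y1; rewrite ?pl_p //= !inE y1c.
exists y2; rewrite ?pr_p //= !inE y2S andbT; apply: contraNneq (pl_pr y1 y1pl) => y2c.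
by rewrite y1c -y2c.
Qed.

Lemma Omega_le_Gm_cut m : cut_size D (Gm_rel e M m) (Some v) None < sigma M ->
  Omega e M v <= cut_size D (Gm_rel e M m) (Some v) None.
Proof.
rewrite sigma_aux => /cut_size_attained[S [sub sep] <-].
have [nS vS SN] := cut_subset_preimage sub.
rewrite -(card_preimage_Some nS); apply: Omega_le_cover; rewrite ?inE //.
exact: csp_path_meets_Gm_cut nS vS sep.
Qed.

Lemma Omega_le_Gstar_cut : cut_size D (Gstar_rel e M) (Some v) None < sigma M ->
  Omega e M v <= cut_size D (Gstar_rel e M) (Some v) None - 1.
Proof.
rewrite sigma_aux => /cut_size_attained[S [sub sep] <-].
have [nS vS SN] := cut_subset_preimage sub.
have [c cS] : exists c, #|Some @^-1: S :\ c| = #|Some @^-1: S| - 1.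
  have [-> | [c cS]] := set_0Vmem (Some @^-1: S); first by exists v; rewrite set0D cards0.
  by exists c; rewrite [#|Some @^-1: S|](cardsD1 c) cS add1n subn1.
rewrite -(card_preimage_Some nS) -cS; apply: Omega_le_cover => //.
- exact: subset_trans (subsetDl _ _) SN.
- by rewrite !inE (negbTE vS) andbF.
- exact: csp_path_meets_Gstar_cut nS vS sep.
Qed.

Lemma leq_Omega_of_cuts k : k <= sigma M ->
  k.+1 < cut_size D (Gstar_rel e M) (Some v) None ->
  (forall m, m \in M -> k < cut_size D (Gm_rel e M m) (Some v) None) ->
  k <= Omega e M v.
Proof.
move=> k_sigma k_star k_m; apply: leq_Omega => //; apply: singleton_identifiable => F FN vF Fk.
apply: csp_path_avoiding => // [|m mM]; first exact: leq_ltn_trans k_star.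
exact: leq_ltn_trans Fk (k_m m mM).
Qed.

End Probing.

Theorem theorem5 (T : finType) (e : rel T) (M : {set T}) (v : T) :
  undirected_graph e -> connected_graph e ->
  M != set0 ->
  v \in nonmon M ->
  let delta_star := cut_size (aux_vertices M) (Gstar_rel e M) (Some v) None in
  let delta_min := \big[minn/#|T|.+1]_(m in M)
                     cut_size (aux_vertices M) (Gm_rel e M m) (Some v) None in
  let pi_v := minn delta_min (delta_star - 1) in
  pi_v + 2 <= sigma M ->
  pi_v - 1 <= Omega e M v <= pi_v.
Proof.
move=> [e_sym _] _ _ vN dstar dmin piv pi_sigma; rewrite inE in vN.
pose cut m := cut_size (aux_vertices M) (Gm_rel e M m) (Some v) None.
have sigma_T : sigma M <= #|T| := max_card _.
have pi_dmin : piv <= dmin := geq_minl _ _.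
have pi_dstar : piv <= dstar - 1 := geq_minr _ _.
apply/andP; split.
  have [pi_le1 | pi_gt1] := leqP piv 1; first by move: pi_le1; rewrite -subn_eq0 => /eqP->.
  apply: leq_Omega_of_cuts => // [||m mM]; try lia.
  by have := @bigmin_le_cond _ _ _ #|T|.+1 m (mem M) cut mM; rewrite -/dmin -/(cut m); lia.
have [dmin_le | dstar_lt] := leqP dmin (dstar - 1).
  have [m mM dmin_m] : exists2 m, m \in M & dmin = cut m.
    by apply: bigmin_attained; rewrite -/dmin; lia.
  have -> : piv = dmin by apply/minn_idPl.
  by rewrite dmin_m; apply: Omega_le_Gm_cut => //; rewrite -/(cut m) -dmin_m; lia.
have -> : piv = dstar - 1 by apply/minn_idPr/ltnW.
by apply: Omega_le_Gstar_cut => //; lia.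
Qed.
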